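(* Let $\Psi=\{\psi_i\}_{i=1}^N\subset\mathbb{R}^d$ be a frame for $\mathbb{R}^d$ with $\sum_{i=1}^N\psi_i=0$, and let $\mu=\frac1N\sum_{i=1}^N\delta_{\psi_i}$. Then $\mu$ has no equal-weight transport dual supported on a set of cardinality $d$; that is, there is no measure of the form $\nu=\frac1d\sum_{k=1}^d\delta_{\varphi_k}$ with $d$ distinct points $\varphi_1,\dots,\varphi_d\in\mathbb{R}^d$ such that $\nu\in D_\mu$.
   Context: A finite frame for $\mathbb{R}^d$ is a finite set of vectors spanning $\mathbb{R}^d$. $\Gamma(\mu,\nu)$ is the set of probability measures on $\mathbb{R}^d\times\mathbb{R}^d$ with marginals $\mu$ and $\nu$. For a probabilistic frame $\mu$ (a probability measure with finite second moment whose support spans $\mathbb{R}^d$), a probability measure $\nu$ with finite second moment is a transport dual to $\mu$ if there exists $\gamma\in\Gamma(\mu,\nu)$ with $\iint xy^\top d\gamma(x,y)=I$; $D_\mu$ denotes the set of transport duals of $\mu$. *)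

From HB Require Import structures.
From mathcomp Require Import all_boot all_order all_algebra.
From mathcomp Require Import all_classical all_reals all_analysis.
Set Implicit Arguments. Unset Strict Implicit. Unset Printing Implicit Defensive.
Import Order.TTheory GRing.Theory Num.Theory.
Import numFieldNormedType.Exports.
Local Open Scope classical_set_scope.
Local Open Scope ring_scope.

Definition Rd (R : realType) (d : nat) : measurableType _ :=
  g_sigma_algebraType (open : set (set 'rV[R]_d)).

Definition uniform_atoms (R : realType) (d n : nat) (p : 'I_n -> Rd R d)
  (A : set (Rd R d)) : \bar R :=
  (\sum_(i < n) ((n%:R)^-1)%:E * \d_(p i) A)%E.

Definition is_frame (R : realType) (d N : nat) (psi : 'I_N -> 'rV[R]_d) : Prop :=
  row_full (\matrix_(i < N) psi i).

Definition is_coupling (R : realType) (d : nat)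
  (mu nu : set (Rd R d) -> \bar R)
  (gamma : probability (Rd R d * Rd R d)%type R) : Prop :=
  forall A : set (Rd R d), measurable A ->
    gamma (fst @^-1` A) = mu A /\ gamma (snd @^-1` A) = nu A.

Definition finite_second_moment (R : realType) (d : nat)
  (nu : probability (Rd R d) R) : Prop :=
  (\int[nu]_x (\sum_(i < d) ((x : 'rV[R]_d) 0 i) ^+ 2)%:E < +oo)%E.

(* nu is in D_mu : there is gamma in Gamma(mu,nu) with
   \iint x y^T dgamma = I (entrywise, with the integrals existing) *)
Definition transport_dual (R : realType) (d : nat)
  (mu nu : probability (Rd R d) R) : Prop :=
  finite_second_moment nu /\
  exists gamma : probability (Rd R d * Rd R d)%type R,
    is_coupling mu nu gamma /\
    forall i j : 'I_d,
      gamma.-integrable setT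
        (fun z => (((z.1 : 'rV[R]_d) 0 i) * ((z.2 : 'rV[R]_d) 0 j))%:E) /\
      (\int[gamma]_z (((z.1 : 'rV[R]_d) 0 i) * ((z.2 : 'rV[R]_d) 0 j))%:E
         = ((i == j)%:R)%:E)%E.

(** The cross moments [\iint x y^T dγ = I] give [\iint x <y, c> dγ = c] for
   every [c].  Any [d] points [φ_k] of [R^d] satisfy [<φ_k, c> = a] for some
   [c <> 0]; as [ν] is carried by the [φ_k], [<y, c> = a] holds γ-a.e., so
   [c = a \iint x dγ = a (1/N) Σ ψ_i = 0], a contradiction. *)
From HB Require Import structures.
From mathcomp Require Import all_boot all_order all_algebra.
From mathcomp Require Import all_classical all_reals all_analysis.
From mathcomp Require Import measurable_realfun.
Set Implicit Arguments. Unset Strict Implicit. Unset Printing Implicit Defensive.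
Import Order.TTheory GRing.Theory Num.Theory.
Import numFieldNormedType.Exports.
Local Open Scope classical_set_scope.
Local Open Scope ring_scope.

Lemma exists_const_image (F : fieldType) (m n : nat) (Phi : 'M[F]_(m, n)) :
  (0 < m)%N -> (m <= n)%N ->
  exists2 c : 'cV_n, c != 0 & exists a, Phi *m c = const_mx a.
Proof.
move=> m_gt0 le_mn.
(* [B] has more rows than columns; a row [(c^T, -a)] of its left kernel gives
   [Phi c = a 1], and [c = 0] would force [a = 0] since [m > 0]. *)
pose B : 'M[F]_(n + 1, m) := col_mx Phi^T (const_mx 1).
have : kermx B != 0.
  rewrite kermx_eq0; apply/negP => /eqP rkB.
  by move: (rank_leq_col B); rewrite rkB addn1 ltnNge le_mn.
case/rowV0Pn=> v /sub_kermxP vB v_neq0.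
have vrE : rsubmx v *m const_mx 1 = const_mx (rsubmx v 0 0) :> 'rV[F]_m.
  by apply/rowP => k; rewrite !mxE big_ord1 !mxE mulr1.
have {vB} vlE : lsubmx v *m Phi^T = const_mx (- rsubmx v 0 0).
  move: vB; rewrite -[v in v *m _]hsubmxK mul_row_col vrE => /(canRL (addrK _)).
  by rewrite sub0r => ->; apply/rowP => k; rewrite !mxE.
exists (lsubmx v)^T.
  apply: contraNneq v_neq0 => /(congr1 trmx); rewrite trmxK trmx0 => vl0.
  have /rowP/(_ (Ordinal m_gt0)) := vlE; rewrite vl0 mul0mx !mxE => /esym/eqP.
  rewrite oppr_eq0 => /eqP vr0; rewrite -[v]hsubmxK vl0.
  by rewrite (_ : rsubmx v = 0) ?row_mx0 //; apply/rowP => j; rewrite ord1 !mxE vr0.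
by exists (- rsubmx v 0 0); apply: trmx_inj; rewrite trmx_mul trmxK trmx_const.
Qed.

Lemma measurable_set1_Rd (R : realType) (d : nat) (a : Rd R d) :
  measurable [set a].
Proof.
rewrite -[X in measurable X]setCK; apply: measurableC.
apply: sub_sigma_algebra; rewrite openC.
exact/accessible_closed_set1/hausdorff_accessible/norm_hausdorff.
Qed.

Lemma measurable_range_Rd (R : realType) (d n : nat) (p : 'I_n -> Rd R d) :
  measurable (range p).
Proof.
rewrite -bigcup_imset1.
apply: fin_bigcup_measurable => // i _; exact: measurable_set1_Rd.
Qed.

Section UniformAtoms.
Variables (R : realType) (d n : nat) (p : 'I_n -> Rd R d).

Definition atom_mult (k : 'I_n) : nat := #|[pred m | p m == p k]|.

Lemma atom_mult_neq0 k : (atom_mult k)%:R != 0 :> R.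
Proof. by rewrite pnatr_eq0 -lt0n; apply/card_gt0P; exists k; rewrite inE. Qed.

Lemma uniform_atoms_set1 k :
  uniform_atoms p [set p k] = ((atom_mult k)%:R / n%:R)%:E.
Proof.
rewrite /uniform_atoms.
rewrite (eq_bigr (fun m => ((n%:R)^-1 * (if p m == p k then 1 else 0))%:E)).
  by rewrite sumEFin -mulr_sumr -big_mkcond sumr_const mulrC.
move=> m _; rewrite diracE -EFinM; congr (_ * _)%:E.
by case: eqVneq => [->|/eqP pmk]; [rewrite mem_set | rewrite memNset].
Qed.

Lemma uniform_atoms_setC_range : uniform_atoms p (~` range p) = 0%E.
Proof.
rewrite /uniform_atoms big1 // => k _.
by rewrite diracE memNset ?mule0 // => /(_ (ex_intro2 _ _ k I erefl)).
Qed.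

End UniformAtoms.

Section Couplings.
Variables (R : realType) (d : nat) (mu nu : set (Rd R d) -> \bar R).
Variable gamma : probability (Rd R d * Rd R d)%type R.
Hypothesis gamma_coupling : is_coupling mu nu gamma.

Lemma coupling_ae_range_fst (n : nat) (p : 'I_n -> Rd R d) :
  (forall A, measurable A -> mu A = uniform_atoms p A) ->
  {ae gamma, forall z, range p z.1}.
Proof.
move=> mu_atoms; have mC := measurableC (measurable_range_Rd p).
change (gamma.-negligible (fst @^-1` (~` range p))); apply/negligibleP.
  by rewrite -[X in measurable X]setTI; exact: measurable_fst _ _ mC.
by rewrite -(uniform_atoms_setC_range p) -mu_atoms //; exact: (gamma_coupling mC).1.
Qed.

Lemma coupling_ae_range_snd (n : nat) (p : 'I_n -> Rd R d) :
  (forall A, measurable A -> nu A = uniform_atoms p A) ->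
  {ae gamma, forall z, range p z.2}.
Proof.
move=> nu_atoms; have mC := measurableC (measurable_range_Rd p).
change (gamma.-negligible (snd @^-1` (~` range p))); apply/negligibleP.
  by rewrite -[X in measurable X]setTI; exact: measurable_snd _ _ mC.
by rewrite -(uniform_atoms_setC_range p) -nu_atoms //; exact: (gamma_coupling mC).2.
Qed.

Variables (n : nat) (p : 'I_n -> Rd R d).
Hypothesis mu_atoms : forall A, measurable A -> mu A = uniform_atoms p A.

Lemma integral_coupling_fst (f : Rd R d -> R) (g : Rd R d * Rd R d -> \bar R) :
  measurable_fun setT g -> g = (fun z => (f z.1)%:E) %[ae gamma] ->
  (\int[gamma]_z g z = ((n%:R)^-1 * \sum_(k < n) f (p k))%:E)%E.
Proof.
move=> mg g_ae.
pose E k := fst @^-1` [set p k] : set (Rd R d * Rd R d).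
have mE k : measurable (E k).
  by rewrite -[X in measurable X]setTI; exact: measurable_fst _ _ (measurable_set1_Rd _).
(* Each of the [atom_mult p k] indices hitting the atom [p k] carries the
   weight [w k], so the simple function [s] agrees with [f] on the atoms. *)
pose w k := f (p k) / (atom_mult p k)%:R.
pose s z := (\sum_(k < n) w k * \1_(E k) z)%:E.
have sE : s = fun z => (\sum_(k < n) (w k)%:E * (\1_(E k) z)%:E)%E.
  by apply/funext => z; rewrite /s -sumEFin; under eq_bigr do rewrite EFinM.
have int_s : gamma.-integrable setT s.
  rewrite sE; apply: (integrable_sum measurableT) => k _.
  exact/(integrableZl measurableT)/integrable_indic.
have s_atom z m : z.1 = p m -> s z = (f z.1)%:E.
  move=> zm; rewrite /s zm; congr (_%:E).
  rewrite (eq_bigr (fun k => if p k == p m then w m else 0)).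
    rewrite -big_mkcond sumr_const -mulr_natr /w -/(atom_mult p m).
    by rewrite divfK // atom_mult_neq0.
  move=> k _; rewrite indicE.
  have [pkm|/eqP pkm] := eqVneq (p k) (p m).
    rewrite mem_set; last exact: etrans zm (esym pkm).
    by rewrite mulr1 /w /atom_mult pkm.
  by rewrite memNset ?mulr0 // => zpk; apply: pkm; rewrite -zm.
have s_ae : g = s %[ae gamma].
  apply: filterS2 g_ae (coupling_ae_range_fst mu_atoms) => z gz [m _ pm] _.
  by rewrite gz // (s_atom z m).
rewrite (ae_eq_integral s g measurableT mg (measurable_int _ int_s) s_ae).
rewrite sE (integral_sum measurableT); last first.
  by move=> k; exact/(integrableZl measurableT)/integrable_indic.
rewrite mulr_sumr -sumEFin; apply: eq_bigr => k _.
rewrite (integralZl measurableT (integrable_indic _ (mE k))).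
rewrite (integral_indic _ measurableT (mE k)) setIT.
transitivity ((w k)%:E * uniform_atoms p [set p k])%E.
  congr (_ * _)%E; rewrite -mu_atoms; last exact: measurable_set1_Rd.
  exact: (gamma_coupling (measurable_set1_Rd _)).1.
by rewrite uniform_atoms_set1 -EFinM /w mulrA divfK ?atom_mult_neq0 // mulrC.
Qed.

End Couplings.

Section CrossMoments.
Variables (R : realType) (d : nat) (gamma : probability (Rd R d * Rd R d)%type R).
Hypothesis cross_moments : forall i j : 'I_d,
  gamma.-integrable setT
    (fun z => (((z.1 : 'rV[R]_d) 0 i) * ((z.2 : 'rV[R]_d) 0 j))%:E) /\
  (\int[gamma]_z (((z.1 : 'rV[R]_d) 0 i) * ((z.2 : 'rV[R]_d) 0 j))%:E
     = ((i == j)%:R)%:E)%E.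

Let cross_momentE (c : 'cV[R]_d) i :
  (fun z => ((z.1 : 'rV[R]_d) 0 i * ((z.2 : 'rV[R]_d) *m c) 0 0)%:E) =
  (fun z => \sum_(l < d) (c l 0)%:E * ((z.1 : 'rV[R]_d) 0 i * (z.2 : 'rV[R]_d) 0 l)%:E)%E.
Proof.
apply/funext => z; rewrite mxE mulr_sumr -sumEFin; apply: eq_bigr => l _.
by rewrite -EFinM mulrA mulrC.
Qed.

Lemma integrable_cross_moment (c : 'cV[R]_d) i :
  gamma.-integrable setT
    (fun z => ((z.1 : 'rV[R]_d) 0 i * ((z.2 : 'rV[R]_d) *m c) 0 0)%:E).
Proof.
rewrite cross_momentE; apply: (integrable_sum measurableT) => l _.
exact/(integrableZl measurableT)/(cross_moments i l).1.
Qed.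

Lemma integral_cross_moment (c : 'cV[R]_d) i :
  (\int[gamma]_z ((z.1 : 'rV[R]_d) 0 i * ((z.2 : 'rV[R]_d) *m c) 0 0)%:E = (c i 0)%:E)%E.
Proof.
rewrite cross_momentE (integral_sum measurableT); last first.
  by move=> l; exact/(integrableZl measurableT)/(cross_moments i l).1.
under eq_bigr => l _ do
  rewrite (integralZl measurableT (cross_moments i l).1) (cross_moments i l).2.
rewrite (bigD1 i) //= eqxx mule1 big1 ?adde0 // => l /negbTE.
by rewrite eq_sym => ->; rewrite mule0.
Qed.

End CrossMoments.

Theorem mainTheorem3 (R : realType) (d N : nat) (psi : 'I_N -> Rd R d)
  (Hframe : is_frame psi)
  (Hsum : \sum_(i < N) (psi i : 'rV[R]_d) = 0)
  (mu : probability (Rd R d) R)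
  (Hmu : forall A : set (Rd R d), measurable A -> mu A = uniform_atoms psi A) :
  ~ exists (phi : 'I_d -> Rd R d) (nu : probability (Rd R d) R),
      injective phi /\
      (forall A : set (Rd R d), measurable A -> nu A = uniform_atoms phi A) /\
      transport_dual mu nu.
Proof.
move=> [phi [nu [_ [Hnu [_ [gamma [gamma_coupling cross_moments]]]]]]].
have [d0|d_gt0] := posnP d.
  subst d; move: (Hnu _ measurableT); rewrite probability_setT /uniform_atoms big_ord0.
  by move/eqP; rewrite onee_eq0.
have [c c_neq0 [a phi_c]] :=
  exists_const_image (\matrix_k (phi k : 'rV[R]_d)) d_gt0 (leqnn d).
move/negP: c_neq0; apply; apply/eqP/colP => i; rewrite mxE.
have mean_psi : \sum_(k < N) (psi k : 'rV[R]_d) 0 i = 0.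
  by rewrite -summxE Hsum mxE.
have := integral_cross_moment cross_moments c i.
rewrite (integral_coupling_fst gamma_coupling Hmu (f := fun x => a * (x : 'rV[R]_d) 0 i)).
- by rewrite -mulr_sumr mean_psi !mulr0 => -[<-].
- exact: measurable_int (integrable_cross_moment cross_moments c i).
- apply: filterS (coupling_ae_range_snd gamma_coupling Hnu) => z [k _ <-] _.
  rewrite mulrC; congr (_ * _)%:E.
  by rewrite -(rowK (fun k => phi k : 'rV[R]_d) k) -row_mul phi_c !mxE.
Qed.
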